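(* Let $T(u)=\exp\big(u\,\mathrm{diag}\big(\begin{psmallmatrix}0&1\\1&0\end{psmallmatrix},\begin{psmallmatrix}0&1\\-1&0\end{psmallmatrix},0\big)\big)\in SO^+(1,4)$ and let $\xi_i=T(u)E_i$. Consider Willmore surfaces (with dual surfaces) invariant under $T$, with initial curve $Y(u)=T(u)(a,0,b,0,c)^t$, $a=\cos\theta$, $b=\sin\theta$, $c=\sqrt{\cos2\theta}$, $0\le\theta\le\pi/4$, and invariant frame along it given in the basis $\xi_i$ by $\psi=(0,-b^2q,-\frac ca\sqrt{1-b^2q^2},abq,\frac ba\sqrt{1-b^2q^2})+hY$, $P_1=(0,a,0,b,0)+mY$, $P_2=(-cq,-b\sqrt{1-b^2q^2},0,a\sqrt{1-b^2q^2},-aq)+pY$ with real constants $h,m,q,p$, $|q|\le1/|b|$, and $\hat Y$ the null vector orthogonal to $P_1,P_2,\psi,\psi'$ with $\langle\hat Y,Y\rangle=-1$. Then all such surfaces are obtained as follows: (i) If $c\ne0$, then $p=\frac{amh+a^2q-bcm\sqrt{1-b^2q^2}}{ac}$ and the Björling data are $(\mu_1,\mu_2,k_1,k_2)=\big(m,\ acq-p,\ \frac{bc\sqrt{1-b^2q^2}}{2a}-\frac h2,\ -\frac c2\big)$, $\rho_1=\frac{a^2h^2-2abch\sqrt{1-q^2b^2}+a^2p^2+c^4q^2-2a^3cpq-a^2m^2+c^2}{2a^2}$, $\rho_2=\frac{a^2cmq-ach-amp-b\sqrt{1-q^2b^2}}{a}$, with $0\le\theta<\pi/4$, $|q|\le1/|\sin\theta|$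 and $m,q,h$ arbitrary. (ii) If $c=0$, the Björling data are $(\mu_1,\mu_2,k_1,k_2,\rho_1,\rho_2)=\big(m,-p,-\frac h2,0,\frac{h^2+p^2-m^2}2,-pm-\sqrt{1-h^2m^2}\big)$ with $h,m,p\in\mathbb R$ arbitrary subject to $|hm|\le1$.
   Context: $\mathbb R^5_1$ is $\mathbb R^5$ with $\langle x,y\rangle=-x_0y_0+\sum_{j=1}^4x_jy_j$ and standard basis $E_0,\dots,E_4$; surfaces are $y=[Y]$ with $Y$ in the forward light cone. For a Willmore surface with canonical lift $Y$ w.r.t. $z=u+iv$ ($\langle Y_z,Y_z\rangle=0,\langle Y_z,Y_{\bar z}\rangle=\frac12$), conformal Gauss map $\psi$ (unit spacelike, orthogonal to $Y,Y_z,Y_{\bar z},Y_{z\bar z}$) and dual surface $[\hat Y]$ (second envelope of $\psi$: $\langle\hat Y,\psi\rangle=\langle\hat Y,\psi_z\rangle=0$, $\langle Y,\hat Y\rangle=-1$), with unit vector fields $P_1,P_2$ along $v=0$ satisfying $P_1\equiv Y_u\bmod Y$, $P_1\perp\hat Y$, $P_2\perp\{\psi,Y,\hat Y,P_1\}$, the Björling data are the real functions with $Y_u=-\mu_1Y+P_1$, $\hat Y_u=\mu_1\hat Y+\rho_1P_1+\rho_2P_2$, $P_{1u}=\mu_2P_2+2k_1\psi+\hat Y+\rho_1Y$, $P_{2u}=-\mu_2P_1-2k_2\psi+\rho_2Y$, $\psi_u=-2k_1P_1+2k_2P_2$. The constraint $\langle\hat Y,\psi'\rangle=0$ is equivalent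 to $amh+a^2q-bcm\sqrt{1-b^2q^2}-acp=0$. *)

From Stdlib Require Import Reals.
Open Scope R_scope.

(** Vectors of R^5_1, coordinates indexed 0..4 (indices >= 5 are ignored). *)
Definition vec := nat -> R.

Definition lor (x y : vec) : R :=
  - x 0%nat * y 0%nat + x 1%nat * y 1%nat + x 2%nat * y 2%nat
  + x 3%nat * y 3%nat + x 4%nat * y 4%nat.

Definition vec5 (a0 a1 a2 a3 a4 : R) : vec :=
  fun i => match i with
           | 0%nat => a0 | 1%nat => a1 | 2%nat => a2 | 3%nat => a3 | 4%nat => a4
           | _ => 0 end.

Definition vadd (x y : vec) : vec := fun i => x i + y i.
Definition vscal (k : R) (x : vec) : vec := fun i => k * x i.

Definition E (i : nat) : vec := fun j => if Nat.eqb j i then 1 else 0.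

(** T(u) = exp(u A) with A = diag([[0,1],[1,0]], J, 0), acting on column
    vectors, where the rotation generator J is normalised so that
    A E_2 = E_3, A E_3 = -E_2. *)
Definition Tmat (u : R) (v : vec) : vec :=
  vec5 (cosh u * v 0%nat + sinh u * v 1%nat)
       (sinh u * v 0%nat + cosh u * v 1%nat)
       (cos u * v 2%nat - sin u * v 3%nat)
       (sin u * v 2%nat + cos u * v 3%nat)
       (v 4%nat).

Definition xi (u : R) (i : nat) : vec := Tmat u (E i).

Definition inXi (u : R) (x : vec) : vec :=
  fun j => sum_f_R0 (fun i => x i * xi u i j) 4.

Definition a_ (th : R) : R := cos th.
Definition b_ (th : R) : R := sin th.
Definition c_ (th : R) : R := sqrt (cos (2 * th)).
Definition s_ (th q : R) : R := sqrt (1 - (b_ th)^2 * q^2).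

Definition Ycurve (th : R) (u : R) : vec :=
  Tmat u (vec5 (a_ th) 0 (b_ th) 0 (c_ th)).

Definition psiF (th h q : R) (u : R) : vec :=
  let a := a_ th in let b := b_ th in let c := c_ th in let s := s_ th q in
  vadd (inXi u (vec5 0 (- b^2 * q) (- (c / a) * s) (a * b * q) ((b / a) * s)))
       (vscal h (Ycurve th u)).

Definition P1F (th m : R) (u : R) : vec :=
  vadd (inXi u (vec5 0 (a_ th) 0 (b_ th) 0)) (vscal m (Ycurve th u)).

Definition P2F (th q p : R) (u : R) : vec :=
  let a := a_ th in let b := b_ th in let c := c_ th in let s := s_ th q in
  vadd (inXi u (vec5 (- c * q) (- b * s) 0 (a * s) (- a * q)))
       (vscal p (Ycurve th u)).

Definition vderiv_at (F : R -> vec) (u : R) (d : vec) : Prop :=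
  forall i, (i < 5)%nat -> derivable_pt_lim (fun t => F t i) u (d i).

Definition has_vderiv (F F' : R -> vec) : Prop :=
  forall u, vderiv_at F u (F' u).

Definition dual_along (th h m q p : R) (Yh : R -> vec) : Prop :=
  forall u,
    lor (Yh u) (Yh u) = 0 /\
    lor (Yh u) (P1F th m u) = 0 /\
    lor (Yh u) (P2F th q p u) = 0 /\
    lor (Yh u) (psiF th h q u) = 0 /\
    (forall dpsi, vderiv_at (psiF th h q) u dpsi -> lor (Yh u) dpsi = 0) /\
    lor (Yh u) (Ycurve th u) = -1.

(** (mu1, mu2, k1, k2, rho1, rho2) are the Björling data: the structure
    equations along v = 0. *)
Definition bjorling_data (th h m q p : R) (Yh : R -> vec)
    (mu1 mu2 k1 k2 rho1 rho2 : R -> R) : Prop :=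
  let Y := Ycurve th in let psi := psiF th h q in
  let P1 := P1F th m in let P2 := P2F th q p in
  has_vderiv Y (fun u => vadd (vscal (- mu1 u) (Y u)) (P1 u)) /\
  has_vderiv Yh (fun u => vadd (vscal (mu1 u) (Yh u))
                   (vadd (vscal (rho1 u) (P1 u)) (vscal (rho2 u) (P2 u)))) /\
  has_vderiv P1 (fun u => vadd (vscal (mu2 u) (P2 u))
                   (vadd (vscal (2 * k1 u) (psi u))
                   (vadd (Yh u) (vscal (rho1 u) (Y u))))) /\
  has_vderiv P2 (fun u => vadd (vscal (- mu2 u) (P1 u))
                   (vadd (vscal (- 2 * k2 u) (psi u)) (vscal (rho2 u) (Y u)))) /\
  has_vderiv psi (fun u => vadd (vscal (- 2 * k1 u) (P1 u))
                   (vscal (2 * k2 u) (P2 u))).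

Definition p_i (th h m q : R) : R :=
  let a := a_ th in let b := b_ th in let c := c_ th in let s := s_ th q in
  (a * m * h + a^2 * q - b * c * m * s) / (a * c).

Definition rho1_i (th h m q p : R) : R :=
  let a := a_ th in let b := b_ th in let c := c_ th in let s := s_ th q in
  (a^2 * h^2 - 2 * a * b * c * h * s + a^2 * p^2 + c^4 * q^2
   - 2 * a^3 * c * p * q - a^2 * m^2 + c^2) / (2 * a^2).

Definition rho2_i (th h m q p : R) : R :=
  let a := a_ th in let b := b_ th in let c := c_ th in let s := s_ th q in
  (a^2 * c * m * q - a * c * h - a * m * p - b * s) / a.

Definition data_i (th h m q p : R) (mu1 mu2 k1 k2 rho1 rho2 : R) : Prop :=
  let a := a_ th in let b := b_ th in let c := c_ th in let s := s_ th q in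
  mu1 = m /\ mu2 = a * c * q - p /\ k1 = b * c * s / (2 * a) - h / 2 /\
  k2 = - c / 2 /\ rho1 = rho1_i th h m q p /\ rho2 = rho2_i th h m q p.

Definition data_ii (h m p : R) (mu1 mu2 k1 k2 rho1 rho2 : R) : Prop :=
  mu1 = m /\ mu2 = - p /\ k1 = - h / 2 /\ k2 = 0 /\
  rho1 = (h^2 + p^2 - m^2) / 2 /\ rho2 = - p * m - sqrt (1 - h^2 * m^2).

From Stdlib Require Import Reals Nsatz Lia Lra.
Open Scope R_scope.

(* The curve and its frame are orbits of the one-parameter group T: each of Y, P1, P2, psi is
   T(u) applied to a fixed vector, and its u-derivative is T(u) A applied to that vector, A
   being the generator of T. Write the fixed vectors in a frame (Y, W, P1, P2, psi) at u = 0,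
   where W is null with <Y, W> = -1 and orthogonal to P1 and psi. All Lorentz products of frame
   vectors are then constants, so the conditions defining the dual surface determine its frame
   coordinates uniquely, <Yh, psi'> = 0 becomes the linear constraint
   a c p = a m h + a^2 q - b c m s, and the structure equations become a linear system for the
   Bjorling data, solved coordinate by coordinate. For c = 0 the constraint reads a q = - h m,
   which gives |h m| <= 1 and the data of case (ii). *)

Definition vec_eq (x y : vec) : Prop := forall i, (i < 5)%nat -> x i = y i.

(* [i < 5] is cleared before [tac] because nsatz fails when it is in the context. *)
Tactic Notation "by_coords" tactic3(tac) :=
  let i := fresh "i" in let Hi := fresh "Hi" in
  intros i Hi; do 5 (destruct i as [|i]; [clear Hi; tac|]); lia.

Definition comb5 (x v0 v1 v2 v3 v4 : vec) : vec :=
  fun i => x 0%nat * v0 i + x 1%nat * v1 i + x 2%nat * v2 i + x 3%nat * v3 i + x 4%nat * v4 i.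

Definition Tgen (x : vec) : vec := vec5 (x 1%nat) (x 0%nat) (- x 3%nat) (x 2%nat) 0.

(* [ai] stands for 1/a, and [c], [s] for sqrt (cos 2 th), sqrt (1 - b^2 q^2): with these
   relations every frame identity below is polynomial. *)
Definition frame_relations (a b c s q ai : R) : Prop :=
  a * ai = 1 /\ a * a + b * b = 1 /\ c * c = a * a - b * b /\ s * s = 1 - b * b * q * q.

Definition coordY : vec := vec5 1 0 0 0 0.
Definition coordP1 (m : R) : vec := vec5 m 0 1 0 0.
Definition coordP2 (p : R) : vec := vec5 p 0 0 1 0.
Definition coordPsi (h : R) : vec := vec5 h 0 0 0 1.

Section Frame.
Variables a b c s q ai : R.

(* Y(0), W, and P1, P2, psi at u = 0 minus their Y-components; <W, P2> = lorWP2 is the only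
   product off the hyperbolic pair (Y, W) and the orthonormal triple (P1, P2, psi). *)
Definition frameY : vec := vec5 a 0 b 0 c.
Definition frameW : vec := vec5 (ai * ai * a / 2) 0 (- (ai * ai * b) / 2) 0 (- (ai * ai * c) / 2).
Definition frameP1 : vec := vec5 0 a 0 b 0.
Definition frameP2 : vec := vec5 (- c * q) (- b * s) 0 (a * s) (- a * q).
Definition framePsi : vec := vec5 0 (- (b * b) * q) (- (c * ai) * s) (a * b * q) ((b * ai) * s).

Definition lorWP2 : R := c * q * ai.

Definition frame_comb (x : vec) : vec := comb5 x frameY frameW frameP1 frameP2 framePsi.

Definition frame_form (x z : vec) : R :=
  - (x 0%nat * z 1%nat + x 1%nat * z 0%nat) + lorWP2 * (x 1%nat * z 3%nat + x 3%nat * z 1%nat)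
  + x 2%nat * z 2%nat + x 3%nat * z 3%nat + x 4%nat * z 4%nat.

Definition frame_coords (v : vec) : vec :=
  let rY := lor v frameY in let rW := lor v frameW in
  let r2 := lor v frameP2 + lorWP2 * rY in
  vec5 (lorWP2 * r2 - rW) (- rY) (lor v frameP1) r2 (lor v framePsi).

(* Frame coordinates of the generator [Tgen] applied to each frame vector. *)
Definition genY : vec := vec5 0 0 1 0 0.
Definition genW : vec :=
  vec5 (- lorWP2 * ai * b * s) 0 (ai * ai * c * c / 2) (- ai * b * s) (- ai * b * b * q).
Definition genP1 : vec :=
  vec5 (c * c * ai * ai / 2 + (a * c * q - lorWP2) * lorWP2) 1 0
       (a * c * q - lorWP2) (b * c * s * ai).
Definition genP2 : vec := vec5 (- ai * b * s) 0 (- a * c * q) 0 c.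
Definition genPsi : vec := vec5 (- lorWP2 * c - ai * b * b * q) 0 (- b * c * s * ai) (- c) 0.

Definition gen_coords (x : vec) : vec := comb5 x genY genW genP1 genP2 genPsi.

Definition coordDual (m p h : R) : vec :=
  vec5 (lorWP2 * (p - lorWP2) + (m * m + (p - lorWP2) * (p - lorWP2) + h * h) / 2)
       1 m (p - lorWP2) h.

Definition is_dual_coords (m p h : R) (k : vec) : Prop :=
  frame_form k k = 0 /\ frame_form k (coordP1 m) = 0 /\ frame_form k (coordP2 p) = 0 /\
  frame_form k (coordPsi h) = 0 /\ frame_form k coordY = -1.

Definition rho1_frame (m p h : R) : R :=
  c * c * ai * ai / 2 + c * c * q * q - c * c * q * q * ai * ai / 2 - a * c * p * q + p * p / 2
  - b * c * s * h * ai + h * h / 2 - m * m / 2.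

Definition rho2_frame (m p h : R) : R := - ai * b * s + (a * c * q - p) * m - c * h.

Definition dual_constraint (m p h : R) : Prop :=
  a * c * p = a * m * h + a * a * q - b * c * m * s.

Definition frame_data (m p h mu1 mu2 k1 k2 rho1 rho2 : R) : Prop :=
  mu1 = m /\ mu2 = a * c * q - p /\ 2 * k1 = b * c * s * ai - h /\ 2 * k2 = - c /\
  rho1 = rho1_frame m p h /\ rho2 = rho2_frame m p h.

Definition frame_structure_eqs (m p h mu1 mu2 k1 k2 rho1 rho2 : R) : Prop :=
  let Y := coordY in let Yh := coordDual m p h in
  let P1 := coordP1 m in let P2 := coordP2 p in let psi := coordPsi h in
  vec_eq (gen_coords Y) (vadd (vscal (- mu1) Y) P1) /\
  vec_eq (gen_coords Yh) (vadd (vscal mu1 Yh) (vadd (vscal rho1 P1) (vscal rho2 P2))) /\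
  vec_eq (gen_coords P1)
    (vadd (vscal mu2 P2) (vadd (vscal (2 * k1) psi) (vadd Yh (vscal rho1 Y)))) /\
  vec_eq (gen_coords P2) (vadd (vscal (- mu2) P1) (vadd (vscal (- 2 * k2) psi) (vscal rho2 Y))) /\
  vec_eq (gen_coords psi) (vadd (vscal (- 2 * k1) P1) (vscal (2 * k2) P2)).

Hypothesis rels : frame_relations a b c s q ai.

Ltac frame_nsatz :=
  destruct rels as (Ha & Hab & Hc & Hs);
  unfold frame_form, frame_coords, gen_coords, frame_comb, comb5, Tgen, rho1_frame, rho2_frame,
    coordDual, coordY, coordP1, coordP2, coordPsi, vadd, vscal,
    frameY, frameW, frameP1, frameP2, framePsi, genY, genW, genP1, genP2, genPsi,
    lorWP2, lor, vec5, Rdiv in *;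
  cbv beta iota zeta in *;
  (* nsatz needs polynomials: 1/2 becomes a variable hh with 2 hh = 1 *)
  assert (H2 : 2 * / 2 = 1) by field; set (hh := / 2) in *;
  nsatz.

Lemma lor_frame_comb x z : lor (frame_comb x) (frame_comb z) = frame_form x z.
Proof. frame_nsatz. Qed.

Lemma gen_frame_comb x : vec_eq (Tgen (frame_comb x)) (frame_comb (gen_coords x)).
Proof. by_coords frame_nsatz. Qed.

Lemma frame_comb_coords v : vec_eq v (frame_comb (frame_coords v)).
Proof. by_coords frame_nsatz. Qed.

Lemma frame_form_nondegenerate x z :
  (forall e, frame_form x e = frame_form z e) -> vec_eq x z.
Proof.
  intros H.
  pose proof (H coordY) as E0; pose proof (H (vec5 0 1 0 0 0)) as E1;
  pose proof (H (coordP1 0)) as E2; pose proof (H (coordP2 0)) as E3;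
  pose proof (H (coordPsi 0)) as E4.
  unfold frame_form, coordY, coordP1, coordP2, coordPsi, vec5 in E0, E1, E2, E3, E4.
  cbv beta iota in E0, E1, E2, E3, E4.
  assert (X1 : x 1%nat = z 1%nat) by lra.
  assert (X3 : x 3%nat = z 3%nat) by (rewrite X1 in E3; lra).
  assert (X0 : x 0%nat = z 0%nat) by (rewrite X3 in E1; lra).
  intros i Hi; do 5 (destruct i as [|i]; [lra|]); lia.
Qed.

Lemma coordDual_spec m p h : is_dual_coords m p h (coordDual m p h).
Proof.
  unfold is_dual_coords, frame_form, coordDual, coordP1, coordP2, coordPsi, coordY, vec5, Rdiv.
  cbv beta iota. repeat split; field.
Qed.

Lemma is_dual_coords_unique m p h k : is_dual_coords m p h k -> vec_eq k (coordDual m p h).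
Proof.
  unfold is_dual_coords, frame_form, coordDual, coordP1, coordP2, coordPsi, coordY, vec5.
  cbv beta iota. intros (Null & D1 & D2 & Dpsi & DY).
  assert (K1 : k 1%nat = 1) by lra.
  rewrite K1 in Null, D1, D2, Dpsi.
  assert (K2 : k 2%nat = m) by lra.
  assert (K3 : k 3%nat = p - lorWP2) by lra.
  assert (K4 : k 4%nat = h) by lra.
  rewrite K2, K3, K4 in Null.
  intros i Hi; do 5 (destruct i as [|i]; [cbv beta iota; try lra; field|]); lia.
Qed.

Lemma frame_form_dual_gen_psi m p h :
  a * frame_form (coordDual m p h) (gen_coords (coordPsi h))
  = a * m * h + a * a * q - b * c * m * s - a * c * p.
Proof. frame_nsatz. Qed.

Lemma rho1_frame_cleared m p h :
  2 * a * a * rho1_frame m p h = a * a * h * h - 2 * a * b * c * h * s + a * a * p * p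
    + c * c * c * c * q * q - 2 * a * a * a * c * p * q - a * a * m * m + c * c.
Proof. frame_nsatz. Qed.

Lemma frame_structure_eqs_iff m p h mu1 mu2 k1 k2 rho1 rho2 :
  dual_constraint m p h ->
  frame_structure_eqs m p h mu1 mu2 k1 k2 rho1 rho2 <-> frame_data m p h mu1 mu2 k1 k2 rho1 rho2.
Proof.
  unfold dual_constraint. intros K. split.
  - intros (CY & _ & CP1 & CP2 & _).
    pose proof (CY 0%nat ltac:(lia)) as Y0.
    pose proof (CP1 0%nat ltac:(lia)) as P10; pose proof (CP1 3%nat ltac:(lia)) as P13;
    pose proof (CP1 4%nat ltac:(lia)) as P14.
    pose proof (CP2 0%nat ltac:(lia)) as P20; pose proof (CP2 4%nat ltac:(lia)) as P24.
    clear CY CP1 CP2. unfold frame_data. repeat split; frame_nsatz.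
  - intros (-> & E0 & E1 & E2 & E3 & E4).
    repeat split; by_coords frame_nsatz.
Qed.

End Frame.

Lemma cosh_sq_sub_sinh_sq u : cosh u * cosh u - sinh u * sinh u = 1.
Proof.
  transitivity (exp u * exp (- u)).
  - unfold cosh, sinh; field.
  - rewrite <- exp_plus, Rplus_opp_r, exp_0; reflexivity.
Qed.

Lemma lor_Tmat u x y : lor (Tmat u x) (Tmat u y) = lor x y.
Proof.
  pose proof (cosh_sq_sub_sinh_sq u); pose proof (sin2_cos2 u); unfold Rsqr in *.
  unfold lor, Tmat, vec5; cbv beta iota; nsatz.
Qed.

Lemma Tmat_Tmat_opp u v : vec_eq (Tmat u (Tmat (- u) v)) v.
Proof.
  assert (Ec : cosh (- u) = cosh u) by (unfold cosh; rewrite Ropp_involutive; field).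
  assert (Es : sinh (- u) = - sinh u) by (unfold sinh; rewrite Ropp_involutive; field).
  pose proof (cosh_sq_sub_sinh_sq u); pose proof (sin2_cos2 u); unfold Rsqr in *.
  unfold Tmat, vec5; rewrite Ec, Es, sin_neg, cos_neg.
  by_coords (cbv beta iota; nsatz).
Qed.

Lemma Tmat_vec_eq u x y : vec_eq x y -> forall j, Tmat u x j = Tmat u y j.
Proof.
  intros H j; unfold Tmat.
  rewrite (H 0%nat), (H 1%nat), (H 2%nat), (H 3%nat), (H 4%nat) by lia; reflexivity.
Qed.

Lemma lor_vec_eq x x' y y' : vec_eq x x' -> vec_eq y y' -> lor x y = lor x' y'.
Proof.
  intros Hx Hy; unfold lor.
  rewrite (Hx 0%nat), (Hx 1%nat), (Hx 2%nat), (Hx 3%nat), (Hx 4%nat) by lia.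
  rewrite (Hy 0%nat), (Hy 1%nat), (Hy 2%nat), (Hy 3%nat), (Hy 4%nat) by lia.
  reflexivity.
Qed.

Lemma inXi_Tmat u x j : inXi u x j = Tmat u x j.
Proof. unfold inXi, xi, E, Tmat, vec5; destruct j as [|[|[|[|[|j]]]]]; simpl; ring. Qed.

Lemma derivable_Tmat x u i : derivable_pt_lim (fun t => Tmat t x i) u (Tmat u (Tgen x) i).
Proof.
  assert (Dlin : forall F f g f' g' k l L, (forall t, f t * k + g t * l = F t) ->
            derivable_pt_lim f u f' -> derivable_pt_lim g u g' -> f' * k + g' * l = L ->
            derivable_pt_lim F u L).
  { intros F f g f' g' k l L HF Hf Hg <-.
    apply (derivable_pt_lim_ext _ _ _ _ HF), (derivable_pt_lim_plus (fun t => f t * k)).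
    - exact (derivable_pt_lim_scal_right f u f' k Hf).
    - exact (derivable_pt_lim_scal_right g u g' l Hg). }
  destruct i as [|[|[|[|[|i]]]]]; unfold Tmat, Tgen, vec5; cbv beta iota.
  - apply (Dlin _ cosh sinh (sinh u) (cosh u) (x 0%nat) (x 1%nat));
      [intro; ring | apply derivable_pt_lim_cosh | apply derivable_pt_lim_sinh | ring].
  - apply (Dlin _ sinh cosh (cosh u) (sinh u) (x 0%nat) (x 1%nat));
      [intro; ring | apply derivable_pt_lim_sinh | apply derivable_pt_lim_cosh | ring].
  - apply (Dlin _ cos sin (- sin u) (cos u) (x 2%nat) (- x 3%nat));
      [intro; ring | apply derivable_pt_lim_cos | apply derivable_pt_lim_sin | ring].
  - apply (Dlin _ sin cos (cos u) (- sin u) (x 2%nat) (x 3%nat));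
      [intro; ring | apply derivable_pt_lim_sin | apply derivable_pt_lim_cos | ring].
  - apply derivable_pt_lim_const.
  - apply derivable_pt_lim_const.
Qed.

Lemma vderiv_at_Tmat F x u d :
  (forall t, vec_eq (F t) (Tmat t x)) -> vderiv_at F u d <-> vec_eq d (Tmat u (Tgen x)).
Proof.
  intros HF.
  assert (D : forall i, (i < 5)%nat -> derivable_pt_lim (fun t => F t i) u (Tmat u (Tgen x) i)).
  { intros i Hi. apply (derivable_pt_lim_ext (fun t => Tmat t x i)).
    - intro t. symmetry. exact (HF t i Hi).
    - apply derivable_Tmat. }
  split.
  - intros Hd i Hi. exact (uniqueness_limite _ _ _ _ (Hd i Hi) (D i Hi)).
  - intros Hd i Hi. rewrite (Hd i Hi). exact (D i Hi).
Qed.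

Definition frame_at (th q : R) : vec -> vec :=
  frame_comb (a_ th) (b_ th) (c_ th) (s_ th q) q (/ a_ th).

Definition orbit (th q : R) (x : vec) (u : R) : vec := Tmat u (frame_at th q x).

Ltac unfold_orbit :=
  unfold orbit, frame_at, frame_comb, comb5, P1F, P2F, psiF, Ycurve, vadd, vscal,
    coordY, coordP1, coordP2, coordPsi, frameY, frameW, frameP1, frameP2, framePsi;
  repeat rewrite inXi_Tmat.

Lemma Ycurve_orbit th q u : vec_eq (Ycurve th u) (orbit th q coordY u).
Proof. by_coords (unfold_orbit; unfold Tmat, vec5, Rdiv; cbv beta iota; ring). Qed.

Lemma P1F_orbit th q m u : vec_eq (P1F th m u) (orbit th q (coordP1 m) u).
Proof. by_coords (unfold_orbit; unfold Tmat, vec5, Rdiv; cbv beta iota; ring). Qed.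

Lemma P2F_orbit th q p u : vec_eq (P2F th q p u) (orbit th q (coordP2 p) u).
Proof. by_coords (unfold_orbit; unfold Tmat, vec5, Rdiv; cbv beta iota; ring). Qed.

Lemma psiF_orbit th q h u : vec_eq (psiF th h q u) (orbit th q (coordPsi h) u).
Proof. by_coords (unfold_orbit; unfold Tmat, vec5, Rdiv; cbv beta iota; ring). Qed.

Lemma curve_frame_relations th q :
  0 <= th <= PI / 4 -> Rabs (sin th * q) <= 1 ->
  0 < a_ th /\ frame_relations (a_ th) (b_ th) (c_ th) (s_ th q) q (/ a_ th).
Proof.
  intros Hth Hq. pose proof PI_RGT_0.
  assert (Ha : 0 < a_ th) by (unfold a_; apply cos_gt_0; lra).
  assert (Hsc : sin th * sin th + cos th * cos th = 1)
    by (pose proof (sin2_cos2 th); unfold Rsqr in *; lra).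
  assert (Hq2 : (sin th * q) * (sin th * q) <= 1)
    by (pose proof (Rsqr_abs (sin th * q)); pose proof (Rabs_pos (sin th * q));
        unfold Rsqr in *; nra).
  split; [exact Ha|]. unfold frame_relations, s_, c_, a_, b_ in *.
  repeat split.
  - field; lra.
  - lra.
  - rewrite sqrt_sqrt; [apply cos_2a | apply cos_ge_0; lra].
  - rewrite sqrt_sqrt; [ring | nra].
Qed.

Section Curve.
Variables th q : R.
Hypothesis th_range : 0 <= th <= PI / 4.
Hypothesis q_range : Rabs (sin th * q) <= 1.

Local Notation form := (frame_form (c_ th) q (/ a_ th)).
Local Notation genc := (gen_coords (a_ th) (b_ th) (c_ th) (s_ th q) q (/ a_ th)).
Local Notation dual_coords := (coordDual (c_ th) q (/ a_ th)).
Local Notation coords := (frame_coords (a_ th) (b_ th) (c_ th) (s_ th q) q (/ a_ th)).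
Local Notation constraint := (dual_constraint (a_ th) (b_ th) (c_ th) (s_ th q) q).
Local Notation data := (frame_data (a_ th) (b_ th) (c_ th) (s_ th q) q (/ a_ th)).

Lemma orbit_vec_eq x z u : vec_eq x z -> forall j, orbit th q x u j = orbit th q z u j.
Proof.
  intros H. apply Tmat_vec_eq. intros i _. unfold frame_at, frame_comb, comb5.
  rewrite (H 0%nat), (H 1%nat), (H 2%nat), (H 3%nat), (H 4%nat) by lia; reflexivity.
Qed.

Lemma lor_orbit x z u : lor (orbit th q x u) (orbit th q z u) = form x z.
Proof.
  destruct (curve_frame_relations th q th_range q_range) as [_ rels].
  unfold orbit. rewrite lor_Tmat. apply lor_frame_comb, rels.
Qed.

Lemma orbit_inj x z u : vec_eq (orbit th q x u) (orbit th q z u) -> vec_eq x z.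
Proof.
  intros H. apply (frame_form_nondegenerate (c_ th) q (/ a_ th)). intro e.
  rewrite <- (lor_orbit x e u), <- (lor_orbit z e u).
  apply lor_vec_eq; [exact H | intros i _; reflexivity].
Qed.

Lemma orbit_surj v u : vec_eq v (orbit th q (coords (Tmat (- u) v)) u).
Proof.
  destruct (curve_frame_relations th q th_range q_range) as [_ rels].
  intros i Hi. rewrite <- (Tmat_Tmat_opp u v i Hi). apply Tmat_vec_eq, frame_comb_coords, rels.
Qed.

Lemma vderiv_orbit F x u d :
  (forall t, vec_eq (F t) (orbit th q x t)) -> vderiv_at F u d <-> vec_eq d (orbit th q (genc x) u).
Proof.
  destruct (curve_frame_relations th q th_range q_range) as [_ rels].
  intros HF. rewrite (vderiv_at_Tmat F (frame_at th q x) u d HF).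
  assert (G : forall j, Tmat u (Tgen (frame_at th q x)) j = orbit th q (genc x) u j)
    by (apply Tmat_vec_eq, gen_frame_comb, rels).
  split; intros H i Hi; rewrite H by exact Hi; [|symmetry]; apply G.
Qed.

Lemma has_vderiv_orbit F F' x G :
  (forall t, vec_eq (F t) (orbit th q x t)) -> (forall t, vec_eq (F' t) (orbit th q (G t) t)) ->
  has_vderiv F F' <-> forall t, vec_eq (genc x) (G t).
Proof.
  intros HF HF'. unfold has_vderiv. split; intros H t; specialize (HF' t).
  - apply (orbit_inj _ _ t). intros i Hi.
    rewrite <- (HF' i Hi). symmetry. exact (proj1 (vderiv_orbit F x t _ HF) (H t) i Hi).
  - apply (vderiv_orbit F x t _ HF). intros i Hi.
    rewrite (HF' i Hi). apply orbit_vec_eq. intros k Hk. symmetry. exact (H t k Hk).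
Qed.

Lemma lor_orbits v w x z u :
  vec_eq v (orbit th q x u) -> vec_eq w (orbit th q z u) -> lor v w = form x z.
Proof. intros Hv Hw. rewrite <- (lor_orbit x z u). apply lor_vec_eq; assumption. Qed.

Lemma lor_dual_psi_deriv_iff m p h :
  form (dual_coords m p h) (genc (coordPsi h)) = 0 <->
  constraint m p h.
Proof.
  destruct (curve_frame_relations th q th_range q_range) as [Ha rels].
  pose proof (frame_form_dual_gen_psi _ _ _ _ _ _ rels m p h) as E.
  unfold dual_constraint. split; intros H.
  - rewrite H in E. lra.
  - apply (Rmult_eq_reg_l (a_ th)); lra.
Qed.

Lemma dual_along_iff h m p Yh :
  dual_along th h m q p Yh <->
  (forall t, vec_eq (Yh t) (orbit th q (dual_coords m p h) t)) /\
  constraint m p h.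
Proof.
  pose proof (fun t => proj2 (vderiv_orbit _ _ t _ (psiF_orbit th q h)) (fun i _ => eq_refl))
    as Dpsi.
  rewrite <- lor_dual_psi_deriv_iff. split.
  - intros D.
    assert (HY : forall t, vec_eq (Yh t) (orbit th q (dual_coords m p h) t)).
    { intro t. destruct (D t) as (N & D1 & D2 & D3 & _ & DY).
      pose proof (orbit_surj (Yh t) t) as Ek.
      set (k := coords (Tmat (- t) (Yh t))) in Ek.
      assert (Hk : is_dual_coords (c_ th) q (/ a_ th) m p h k).
      { unfold is_dual_coords.
        rewrite <- (lor_orbits _ _ _ _ _ Ek Ek), <- (lor_orbits _ _ _ _ _ Ek (P1F_orbit th q m t)),
          <- (lor_orbits _ _ _ _ _ Ek (P2F_orbit th q p t)),
          <- (lor_orbits _ _ _ _ _ Ek (psiF_orbit th q h t)),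
          <- (lor_orbits _ _ _ _ _ Ek (Ycurve_orbit th q t)).
        auto. }
      intros i Hi. rewrite (Ek i Hi). apply orbit_vec_eq, is_dual_coords_unique, Hk. }
    split; [exact HY|].
    destruct (D 0) as (_ & _ & _ & _ & Dp & _).
    rewrite <- (Dp _ (Dpsi 0)). symmetry.
    apply (lor_orbits _ _ _ _ 0); [apply HY | intros i _; reflexivity].
  - intros [HY K] t. destruct (coordDual_spec (c_ th) q (/ a_ th) m p h) as (N & D1 & D2 & D3 & DY).
    repeat split.
    + rewrite (lor_orbits _ _ _ _ _ (HY t) (HY t)). exact N.
    + rewrite (lor_orbits _ _ _ _ _ (HY t) (P1F_orbit th q m t)). exact D1.
    + rewrite (lor_orbits _ _ _ _ _ (HY t) (P2F_orbit th q p t)). exact D2.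
    + rewrite (lor_orbits _ _ _ _ _ (HY t) (psiF_orbit th q h t)). exact D3.
    + intros dpsi Hd. rewrite <- K. apply (lor_orbits _ _ _ _ t); [apply HY|].
      exact (proj1 (vderiv_orbit _ _ t _ (psiF_orbit th q h)) Hd).
    + rewrite (lor_orbits _ _ _ _ _ (HY t) (Ycurve_orbit th q t)). exact DY.
Qed.

Ltac orbit_linear HY :=
  let t := fresh "t" in let i := fresh "i" in let Hi := fresh "Hi" in
  intros t i Hi; unfold vadd, vscal;
  rewrite ?(Ycurve_orbit th q t i Hi), ?(P1F_orbit th q _ t i Hi), ?(P2F_orbit th q _ t i Hi),
    ?(psiF_orbit th q _ t i Hi), ?(HY t i Hi);
  unfold orbit, frame_at, frame_comb, comb5, coordDual, coordY, coordP1, coordP2,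
    coordPsi, Tmat, vec5;
  destruct i as [|[|[|[|[|i]]]]]; try lia; cbv beta iota; ring.

Lemma bjorling_data_iff h m p Yh mu1 mu2 k1 k2 rho1 rho2 :
  (forall t, vec_eq (Yh t) (orbit th q (dual_coords m p h) t)) ->
  bjorling_data th h m q p Yh mu1 mu2 k1 k2 rho1 rho2 <->
  forall t, frame_structure_eqs (a_ th) (b_ th) (c_ th) (s_ th q) q (/ a_ th) m p h
              (mu1 t) (mu2 t) (k1 t) (k2 t) (rho1 t) (rho2 t).
Proof.
  intros HY. unfold bjorling_data; cbv zeta.
  rewrite (has_vderiv_orbit _ _ coordY (fun t => vadd (vscal (- mu1 t) coordY) (coordP1 m))
             (Ycurve_orbit th q)) by orbit_linear HY.
  rewrite (has_vderiv_orbit _ _ (dual_coords m p h)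
             (fun t => vadd (vscal (mu1 t) (dual_coords m p h))
                         (vadd (vscal (rho1 t) (coordP1 m)) (vscal (rho2 t) (coordP2 p)))) HY)
    by orbit_linear HY.
  rewrite (has_vderiv_orbit _ _ (coordP1 m)
             (fun t => vadd (vscal (mu2 t) (coordP2 p)) (vadd (vscal (2 * k1 t) (coordPsi h))
                         (vadd (dual_coords m p h) (vscal (rho1 t) coordY))))
             (P1F_orbit th q m)) by orbit_linear HY.
  rewrite (has_vderiv_orbit _ _ (coordP2 p)
             (fun t => vadd (vscal (- mu2 t) (coordP1 m)) (vadd (vscal (- 2 * k2 t) (coordPsi h))
                         (vscal (rho2 t) coordY)))
             (P2F_orbit th q p)) by orbit_linear HY.
  rewrite (has_vderiv_orbit _ _ (coordPsi h)
             (fun t => vadd (vscal (- 2 * k1 t) (coordP1 m)) (vscal (2 * k2 t) (coordP2 p)))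
             (psiF_orbit th q h)) by orbit_linear HY.
  unfold frame_structure_eqs; cbv zeta. split.
  - intros (A & B & C & D & E) t. repeat split; auto.
  - intros H. repeat split; intro t; destruct (H t) as (A & B & C & D & E); assumption.
Qed.

Lemma bjorling_data_necessary h m p Yh mu1 mu2 k1 k2 rho1 rho2 :
  dual_along th h m q p Yh -> bjorling_data th h m q p Yh mu1 mu2 k1 k2 rho1 rho2 ->
  constraint m p h /\
  forall t, data m p h (mu1 t) (mu2 t) (k1 t) (k2 t) (rho1 t) (rho2 t).
Proof.
  destruct (curve_frame_relations th q th_range q_range) as [_ rels].
  intros D B. apply dual_along_iff in D as [HY K]. split; [exact K|].
  intro t. apply (frame_structure_eqs_iff _ _ _ _ _ _ rels); [exact K|].
  exact (proj1 (bjorling_data_iff _ _ _ _ _ _ _ _ _ _ HY) B t).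
Qed.

Lemma bjorling_data_realized h m p mu1 mu2 k1 k2 rho1 rho2 :
  constraint m p h ->
  (forall t, data m p h (mu1 t) (mu2 t) (k1 t) (k2 t) (rho1 t) (rho2 t)) ->
  dual_along th h m q p (orbit th q (dual_coords m p h)) /\
  bjorling_data th h m q p (orbit th q (dual_coords m p h)) mu1 mu2 k1 k2 rho1 rho2.
Proof.
  destruct (curve_frame_relations th q th_range q_range) as [_ rels].
  intros K F.
  assert (HY : forall t, vec_eq (orbit th q (dual_coords m p h) t)
                                (orbit th q (dual_coords m p h) t))
    by (intros t i _; reflexivity).
  split; [apply dual_along_iff; split; assumption|].
  apply (bjorling_data_iff _ _ _ _ _ _ _ _ _ _ HY). intro t.
  apply (frame_structure_eqs_iff _ _ _ _ _ _ rels); [exact K | apply F].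
Qed.

End Curve.

Lemma rho1_frame_eq th q h m p :
  0 <= th <= PI / 4 -> Rabs (sin th * q) <= 1 ->
  rho1_frame (a_ th) (b_ th) (c_ th) (s_ th q) q (/ a_ th) m p h = rho1_i th h m q p.
Proof.
  intros Hth Hq. destruct (curve_frame_relations th q Hth Hq) as [Ha rels].
  pose proof (rho1_frame_cleared _ _ _ _ _ _ rels m p h) as N.
  unfold rho1_i; cbv zeta.
  apply (Rmult_eq_reg_l (2 * a_ th * a_ th)); [|nra].
  rewrite N. field. lra.
Qed.

Lemma rho2_frame_eq th q h m p :
  0 < a_ th -> rho2_frame (a_ th) (b_ th) (c_ th) (s_ th q) q (/ a_ th) m p h = rho2_i th h m q p.
Proof. intros Ha. unfold rho2_frame, rho2_i; cbv zeta. field. lra. Qed.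

Lemma b_eq_a_of_c_zero th : 0 <= th <= PI / 4 -> c_ th = 0 -> b_ th = a_ th.
Proof.
  intros Hth Hc0. pose proof PI_RGT_0.
  assert (Ha : 0 < a_ th) by (unfold a_; apply cos_gt_0; lra).
  assert (Hb : 0 <= b_ th) by (unfold b_; apply sin_ge_0; lra).
  assert (E : a_ th * a_ th - b_ th * b_ th = 0).
  { unfold c_ in Hc0. unfold a_, b_. rewrite <- cos_2a.
    apply sqrt_eq_0; [apply cos_ge_0; lra | exact Hc0]. }
  nra.
Qed.

Lemma case_i_necessary th h m q p Yh mu1 mu2 k1 k2 rho1 rho2 :
  0 <= th <= PI / 4 -> Rabs (sin th * q) <= 1 ->
  dual_along th h m q p Yh -> bjorling_data th h m q p Yh mu1 mu2 k1 k2 rho1 rho2 ->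
  c_ th <> 0 ->
  p = p_i th h m q /\
  forall u, data_i th h m q p (mu1 u) (mu2 u) (k1 u) (k2 u) (rho1 u) (rho2 u).
Proof.
  intros Hth Hq D B Hc0. destruct (curve_frame_relations th q Hth Hq) as [Ha _].
  destruct (bjorling_data_necessary th q Hth Hq _ _ _ _ _ _ _ _ _ _ D B) as [K F].
  unfold dual_constraint in K.
  split.
  - unfold p_i; cbv zeta. apply (Rmult_eq_reg_l (a_ th * c_ th)).
    + rewrite K. field. auto with real.
    + apply Rmult_integral_contrapositive; split; lra.
  - intro u. destruct (F u) as (-> & -> & E1 & E2 & -> & ->). unfold data_i; cbv zeta.
    repeat split.
    + apply (Rmult_eq_reg_l 2); [rewrite E1; field | ]; lra.
    + lra.
    + apply rho1_frame_eq; assumption.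
    + apply rho2_frame_eq; assumption.
Qed.

Lemma case_ii_necessary th h m q p Yh mu1 mu2 k1 k2 rho1 rho2 :
  0 <= th <= PI / 4 -> Rabs (sin th * q) <= 1 ->
  dual_along th h m q p Yh -> bjorling_data th h m q p Yh mu1 mu2 k1 k2 rho1 rho2 ->
  c_ th = 0 ->
  Rabs (h * m) <= 1 /\
  forall u, data_ii h m p (mu1 u) (mu2 u) (k1 u) (k2 u) (rho1 u) (rho2 u).
Proof.
  intros Hth Hq D B Hc0. destruct (curve_frame_relations th q Hth Hq) as [Ha _].
  pose proof (b_eq_a_of_c_zero th Hth Hc0) as Eab.
  destruct (bjorling_data_necessary th q Hth Hq _ _ _ _ _ _ _ _ _ _ D B) as [K F].
  unfold dual_constraint in K; rewrite Hc0, Eab in K.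
  assert (Eq : b_ th * q = - (h * m)) by (rewrite Eab; apply (Rmult_eq_reg_l (a_ th)); nra).
  split.
  - rewrite <- Rabs_Ropp, <- Eq. exact Hq.
  - intro u. destruct (F u) as (-> & -> & E1 & E2 & -> & ->).
    unfold data_ii, rho1_frame, rho2_frame, s_. rewrite Hc0 in *.
    replace (b_ th ^ 2 * q ^ 2) with ((b_ th * q) ^ 2) by ring. rewrite Eq.
    repeat split; try lra.
    replace ((- (h * m)) ^ 2) with (h ^ 2 * m ^ 2) by ring. rewrite Eab. field. lra.
Qed.

Lemma case_i_realized th h m q :
  0 <= th < PI / 4 -> Rabs (sin th * q) <= 1 ->
  let p := p_i th h m q in
  exists Yh : R -> vec,
    dual_along th h m q p Yh /\
    bjorling_data th h m q p Yh
      (fun _ => m) (fun _ => a_ th * c_ th * q - p)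
      (fun _ => b_ th * c_ th * s_ th q / (2 * a_ th) - h / 2)
      (fun _ => - c_ th / 2)
      (fun _ => rho1_i th h m q p) (fun _ => rho2_i th h m q p).
Proof.
  intros Hth Hq p. pose proof PI_RGT_0.
  assert (Hth' : 0 <= th <= PI / 4) by lra.
  destruct (curve_frame_relations th q Hth' Hq) as [Ha _].
  assert (Hc : 0 < c_ th) by (unfold c_; apply sqrt_lt_R0, cos_gt_0; lra).
  eexists. apply (bjorling_data_realized th q Hth' Hq).
  - unfold dual_constraint, p, p_i; cbv zeta. field. lra.
  - intro t. unfold frame_data. repeat split.
    + field. lra.
    + field.
    + symmetry. apply rho1_frame_eq; assumption.
    + symmetry. apply rho2_frame_eq; assumption.
Qed.

Lemma case_ii_realized h m p :
  Rabs (h * m) <= 1 ->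
  exists (q : R) (Yh : R -> vec),
    Rabs (sin (PI / 4) * q) <= 1 /\
    dual_along (PI / 4) h m q p Yh /\
    bjorling_data (PI / 4) h m q p Yh
      (fun _ => m) (fun _ => - p) (fun _ => - h / 2) (fun _ => 0)
      (fun _ => (h^2 + p^2 - m^2) / 2)
      (fun _ => - p * m - sqrt (1 - h^2 * m^2)).
Proof.
  intros Hhm. pose proof PI_RGT_0.
  assert (Hth : 0 <= PI / 4 <= PI / 4) by lra.
  assert (Hc0 : c_ (PI / 4) = 0).
  { unfold c_. replace (2 * (PI / 4)) with (PI / 2) by field. rewrite cos_PI2. apply sqrt_0. }
  assert (Ha : 0 < a_ (PI / 4)) by (unfold a_; apply cos_gt_0; lra).
  pose proof (b_eq_a_of_c_zero _ Hth Hc0) as Eab.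
  set (q := - (h * m) / a_ (PI / 4)).
  assert (Eq : sin (PI / 4) * q = - (h * m)).
  { change (sin (PI / 4)) with (b_ (PI / 4)). rewrite Eab. unfold q. field. lra. }
  assert (Hq : Rabs (sin (PI / 4) * q) <= 1) by (rewrite Eq, Rabs_Ropp; exact Hhm).
  exists q. eexists. split; [exact Hq|].
  apply (bjorling_data_realized _ q Hth Hq).
  - unfold dual_constraint. rewrite Hc0. unfold q. field. lra.
  - assert (Es : s_ (PI / 4) q = sqrt (1 - h ^ 2 * m ^ 2)).
    { unfold s_. f_equal. change (b_ (PI / 4)) with (sin (PI / 4)).
      replace (sin (PI / 4) ^ 2 * q ^ 2) with ((sin (PI / 4) * q) ^ 2) by ring.
      rewrite Eq. ring. }
    intro t. unfold frame_data, rho1_frame, rho2_frame. rewrite Hc0, Es, Eab.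
    repeat split; field; lra.
Qed.

Theorem mainTheorem8 :
  (* every such surface has the stated Björling data *)
  (forall (th h m q p : R) (Yh : R -> vec) (mu1 mu2 k1 k2 rho1 rho2 : R -> R),
     0 <= th <= PI / 4 ->
     Rabs (sin th * q) <= 1 ->
     dual_along th h m q p Yh ->
     bjorling_data th h m q p Yh mu1 mu2 k1 k2 rho1 rho2 ->
     (c_ th <> 0 ->
        p = p_i th h m q /\
        forall u, data_i th h m q p (mu1 u) (mu2 u) (k1 u) (k2 u) (rho1 u) (rho2 u)) /\
     (c_ th = 0 ->
        Rabs (h * m) <= 1 /\
        forall u, data_ii h m p (mu1 u) (mu2 u) (k1 u) (k2 u) (rho1 u) (rho2 u))) /\
  (* case (i): every 0 <= th < PI/4, |q| <= 1/|sin th|, m, q, h arbitrary occurs *)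
  (forall th h m q : R,
     0 <= th < PI / 4 ->
     Rabs (sin th * q) <= 1 ->
     let p := p_i th h m q in
     exists Yh : R -> vec,
       dual_along th h m q p Yh /\
       bjorling_data th h m q p Yh
         (fun _ => m) (fun _ => a_ th * c_ th * q - p)
         (fun _ => b_ th * c_ th * s_ th q / (2 * a_ th) - h / 2)
         (fun _ => - c_ th / 2)
         (fun _ => rho1_i th h m q p) (fun _ => rho2_i th h m q p)) /\
  (* case (ii): th = PI/4, every h, m, p with |h m| <= 1 occurs *)
  (forall h m p : R,
     Rabs (h * m) <= 1 ->
     exists (q : R) (Yh : R -> vec),
       Rabs (sin (PI / 4) * q) <= 1 /\
       dual_along (PI / 4) h m q p Yh /\
       bjorling_data (PI / 4) h m q p Yh
         (fun _ => m) (fun _ => - p) (fun _ => - h / 2) (fun _ => 0)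
         (fun _ => (h^2 + p^2 - m^2) / 2)
         (fun _ => - p * m - sqrt (1 - h^2 * m^2))).
Proof.
  split; [|split].
  - intros th h m q p Yh mu1 mu2 k1 k2 rho1 rho2 Hth Hq D B. split.
    + exact (case_i_necessary th h m q p Yh mu1 mu2 k1 k2 rho1 rho2 Hth Hq D B).
    + exact (case_ii_necessary th h m q p Yh mu1 mu2 k1 k2 rho1 rho2 Hth Hq D B).
  - exact case_i_realized.
  - exact case_ii_realized.
Qed.
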